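(* Let $G$ be an extraspecial or almost extraspecial $2$-group of order $2^n$, $n\geq 3$. Then for every $0\leq k\leq n$, $$s_k(G)\leq s_k(D_8\times C_2^{n-3}).$$
   Context: A finite $2$-group $G$ is extraspecial if $Z(G)=G'=\Phi(G)$ has order $2$, and almost extraspecial if $G'=\Phi(G)$ has order $2$ and $Z(G)\cong C_4$. For a finite $2$-group $G$ of order $2^n$ and $0\le k\le n$, $s_k(G)$ is the number of subgroups of $G$ of order $2^k$. $D_8$ is the dihedral group of order $8$, $C_2^m$ the elementary abelian group of order $2^m$. *)

From mathcomp Require Import all_boot all_fingroup all_algebra all_solvable.
Set Implicit Arguments. Unset Strict Implicit. Unset Printing Implicit Defensive.
Local Open Scope group_scope.

Definition s_k (gT : finGroupType) (G : {set gT}) (k : nat) : nat :=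
  #|[set H : {group gT} | (H \subset G) && (#|H| == (2 ^ k)%N)]|.

Definition extraspecial2 (gT : finGroupType) (G : {set gT}) : Prop :=
  [/\ 'Z(G) = G^`(1), G^`(1) = 'Phi(G) & #|'Z(G)| = 2%N].

Definition almost_extraspecial2 (gT : finGroupType) (G : {set gT}) : Prop :=
  [/\ G^`(1) = 'Phi(G), #|G^`(1)| = 2%N, cyclic 'Z(G) & #|'Z(G)| = 4%N].

(* The group D_8 x C_2^m, with C_2^m realized as the additive group of 'rV['Z_2]_m *)
Definition D8xC2 (m : nat) : finGroupType := ('D_8 * 'rV['Z_2]_m)%type.

(* Let z generate G' = Phi(G).  Then z is a central involution and every square
   of G lies in {1, z}.  Subgroups of order 2^k containing z correspond to
   subgroups of the elementary abelian group G/<z>, so their number depends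
   only on |G|.  Subgroups avoiding z are elementary abelian; counting pairs
   (x, H) with x an involution of H shows that (2^(k+1) - 1) times their number
   for order 2^(k+1) is the sum, over the involutions x <> 1, z, of the same
   count for C_G(x)/<x> and order 2^k.  Let e(m,k) be that count in C2^m.  When
   G has an element of order 4, induction on |G| bounds the count for G by
   2 e(n-1,k) - e(n-2,k), using two estimates on the set Omega of elements of
   square 1: |Omega(G)| + |Omega(Z(G))| <= |G| (translate Omega(Z(G)) by an
   element of order 4), and 4 |Omega(G)| <= 3 |G| for nonabelian G.  In
   D8 x C2^(n-3) the two elementary abelian maximal subgroups containing z
   already provide that many subgroups avoiding z. *)

From mathcomp Require Import all_boot all_fingroup all_algebra all_solvable.
From mathcomp Require Import mxabelem zify.
Set Implicit Arguments. Unset Strict Implicit. Unset Printing Implicit Defensive.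
Local Open Scope group_scope.

Definition s_with (gT : finGroupType) (K : {set gT}) (z : gT) (k : nat) : nat :=
  #|[set H : {group gT} | [&& H \subset K, #|H| == (2 ^ k)%N & z \in H]]|.

Definition s_avoid (gT : finGroupType) (K : {set gT}) (z : gT) (k : nat) : nat :=
  #|[set H : {group gT} | [&& H \subset K, #|H| == (2 ^ k)%N & z \notin H]]|.

Definition squares_in (gT : finGroupType) (K : {set gT}) (z : gT) : Prop :=
  [/\ z \in 'Z(K), z != 1, z ^+ 2 = 1 & forall x, x \in K -> x ^+ 2 = 1 \/ x ^+ 2 = z].

Lemma sum_bool_card (T : finType) (A : {pred T}) (P : pred T) :
  \sum_(x in A) (P x : nat) = #|[set x in A | P x]|.
Proof.
rewrite -sum1_card [RHS]big_mkcond [LHS]big_mkcond /=; apply: eq_bigr => x _.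
by rewrite inE; case: (x \in A).
Qed.

Lemma double_count (I J : finType) (A : {pred I}) (R : I -> {set J}) :
  \sum_(i in A) #|R i| = \sum_j #|[set i in A | j \in R i]|.
Proof.
under eq_bigr do rewrite -sum1_card big_mkcond /=.
by rewrite exchange_big; apply: eq_bigr => j _; rewrite sum_bool_card.
Qed.

Section SubgroupCounting.
Variable gT : finGroupType.
Implicit Types (K H N C : {group gT}) (z : gT).

Lemma s_k_split (K : {set gT}) z k : s_k K k = s_with K z k + s_avoid K z k.
Proof.
rewrite /s_k /s_with /s_avoid -(cardsID [set H : {group gT} | z \in H]).
by congr (_ + _); apply: eq_card => H; rewrite !inE; case: (z \in H); rewrite ?andbT ?andbF.
Qed.

Lemma s_with0 (K : {set gT}) z : z != 1 -> s_with K z 0 = 0.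
Proof.
move=> nz; apply: eq_card0 => H; rewrite !inE; apply/and3P => -[_ /eqP oH zH].
by move: zH; rewrite (card1_trivg oH) inE (negPf nz).
Qed.

Lemma s_avoid0 K z : z != 1 -> s_avoid K z 0 = 1%N.
Proof.
move=> nz; apply: (@eq_card1 _ 1%G) => H; rewrite !inE.
apply/and3P/eqP => [[_ /eqP oH _] | ->]; first exact/val_inj/card1_trivg.
by rewrite sub1G cards1 inE eq_sym.
Qed.

Lemma card_quotient_subgroups N C (P : pred {set coset_of N}) : N <| C ->
  #|[set H : {group gT} | [&& N \subset H, H \subset C & P (H / N)]]| =
  #|[set Hb : {group coset_of N} | (Hb \subset C / N) && P Hb]|.
Proof.
move=> nsNC; have [_ nNC] := andP nsNC.
rewrite -(card_in_imset (f := fun H : {group gT} => (H / N)%G)); last first.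
  move=> H1 H2; rewrite !inE => /and3P[sNH1 sH1C _] /and3P[sNH2 sH2C _] eqH.
  apply/val_inj/(@quotient_inj _ N); last exact: (congr1 val eqH).
    by rewrite /normal sNH1 (subset_trans sH1C).
  by rewrite /normal sNH2 (subset_trans sH2C).
apply: eq_card => Hb; rewrite inE; apply/imsetP/andP => [[H] | [sHbC PHb]].
  by rewrite inE => /and3P[_ sHC PH] ->; rewrite quotientS.
have [H defHb sNH sHC] := inv_quotientS nsNC sHbC.
by exists H; [rewrite inE sNH sHC -defHb | apply: val_inj].
Qed.

Lemma card_quotient2 N H k : #|N| = 2 -> N \subset H -> H \subset 'N(N) ->
  (#|H| == (2 ^ k.+1)%N) = (#|H / N| == (2 ^ k)%N).
Proof.
move=> oN sNH nNH; rewrite card_quotient // -(Lagrange sNH) oN expnS.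
by rewrite eqn_pmul2l.
Qed.

Lemma s_with_quotient K z k : z \in 'Z(K) -> #[z] = 2 ->
  s_with K z k.+1 = s_k (K / <[z]>) k.
Proof.
move=> Zz oz; have nsZK : <[z]> <| K by rewrite sub_center_normal ?cycle_subG.
have [_ nZK] := andP nsZK.
rewrite /s_k -(card_quotient_subgroups (fun Hb => #|Hb| == (2 ^ k)%N) nsZK).
apply: eq_card => H; rewrite !inE cycle_subG.
case sHK: (H \subset K); last by rewrite !andbF.
case zH: (z \in H); rewrite ?andbF //= andbT.
by rewrite (card_quotient2 _ oz) ?cycle_subG ?(subset_trans sHK).
Qed.

End SubgroupCounting.

Lemma s_k_isog (gT rT : finGroupType) (G : {group gT}) (R : {group rT}) k :
  G \isog R -> s_k G k = s_k R k.
Proof.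
suff le_sk (aT bT : finGroupType) (A : {group aT}) (B : {group bT}) :
    A \isog B -> s_k A k <= s_k B k.
  by move=> isoGR; apply/eqP; rewrite eqn_leq !le_sk // isog_sym.
case/isogP=> f injf <-; rewrite /s_k.
rewrite -(card_in_imset (f := fun H : {group aT} => (f @* H)%G)); last first.
  move=> H1 H2; rewrite !inE => /andP[sH1A _] /andP[sH2A _] eqfH.
  exact/val_inj/(injm_morphim_inj injf sH1A sH2A)/(congr1 val eqfH).
apply/subset_leq_card/subsetP => Hf /imsetP[H]; rewrite !inE => /andP[sHA oH] ->.
by rewrite morphimS // card_injm.
Qed.

Section SquaresIn.
Variables (gT : finGroupType) (K : {group gT}) (z : gT).
Hypothesis sqK : squares_in K z.

Lemma squares_in_order : #[z] = 2.
Proof. by have [_ nz z2 _] := sqK; apply: nt_prime_order. Qed.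

Lemma squares_in_mem : z \in K.
Proof. by have [/centerP[]] := sqK. Qed.

Lemma squares_in_gt1 : 1 < #|K|.
Proof.
have [_ nz _ _] := sqK.
by rewrite cardG_gt1; apply/trivgPn; exists z; rewrite ?squares_in_mem.
Qed.

Lemma squares_in_center : squares_in 'Z(K) z.
Proof.
have [Zz nz z2 sqx] := sqK.
split=> // [|x /setIP[Kx _]]; last exact: sqx.
by rewrite (center_idP (center_abelian K)).
Qed.

Lemma sub1z_Ldiv2 : [set 1; z] \subset 'Ldiv_2(K).
Proof.
have [_ _ z2 _] := sqK.
by apply/subsetP => x; rewrite !inE => /orP[] /eqP ->;
  rewrite ?group1 ?expg1n ?squares_in_mem ?z2 eqxx.
Qed.

Lemma card_Ldiv2D : #|'Ldiv_2(K) :\: [set 1; z]| = (#|'Ldiv_2(K)| - 2)%N.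
Proof.
have [_ nz _ _] := sqK.
by rewrite cardsD (setIidPr sub1z_Ldiv2) cards2 eq_sym nz.
Qed.

Lemma card_squares_in_quotient : #|K| = (2 * #|K / <[z]>|)%N.
Proof.
have [Zz _ _ _] := sqK.
have /andP[sZK nZK] : <[z]> <| K by rewrite sub_center_normal ?cycle_subG.
by rewrite card_quotient // -(Lagrange sZK) -orderE squares_in_order.
Qed.

Lemma squares_in_quotient_abelem : 2.-abelem (K / <[z]>).
Proof.
apply/exponent2_abelem/exponentP => _ /morphimP[x Nx Kx ->].
rewrite -morphX //; apply: coset_id.
by have [_ _ _ sqx] := sqK; case: (sqx x Kx) => ->; rewrite ?group1 ?cycle_id.
Qed.

Lemma avoid_exponent2 (H : {group gT}) : H \subset K -> z \notin H -> exponent H %| 2.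
Proof.
move=> sHK zH; apply/exponentP => x Hx.
have [_ _ _ sqx] := sqK; case: (sqx x (subsetP sHK x Hx)) => // x2z.
by move: zH; rewrite -x2z groupX.
Qed.

Section Centralizer.
Variable x : gT.
Hypotheses (Kx : x \in K) (x2 : x ^+ 2 = 1) (x1z : x \notin [set 1; z]).

Let nx1 : x != 1. Proof. by move: x1z; rewrite !inE negb_or => /andP[]. Qed.
Let ox : #|<[x]>| = 2. Proof. by rewrite -orderE; apply: nt_prime_order. Qed.

Lemma cycle_normal_cent : <[x]> <| 'C_K[x].
Proof.
by rewrite /normal cycle_subG inE Kx cent1id cents_norm // cent_cycle subsetIr.
Qed.

Lemma card_cent_quotient : #|'C_K[x]| = (2 * #|'C_K[x] / <[x]>|)%N.
Proof.
have [sXC nXC] := andP cycle_normal_cent.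
by rewrite card_quotient // -{1}ox Lagrange.
Qed.

Lemma card_cent_quotient_pow m : #|K| = (2 ^ m)%N ->
  exists2 j, #|'C_K[x] / <[x]>| = (2 ^ j)%N &
             (if x \in 'Z(K) then j.+1 = m else j.+2 <= m).
Proof.
move=> oK; have sCK : 'C_K[x] \subset K := subsetIl _ _.
have [i _ oC] : exists2 i, i <= m & #|'C_K[x]| = (2 ^ i)%N.
  by apply/dvdn_pfactor => //; rewrite -oK cardSg.
have := card_cent_quotient; rewrite oC; case: i oC => [|j] oC; first by rewrite expn0; lia.
rewrite expnS => /eqP; rewrite eqn_pmul2l // eq_sym => /eqP oQ.
exists j => //; case: ifP => Zx.
  have /setIidPl eqCK : K \subset 'C[x] by rewrite sub_cent1; case/setIP: Zx.
  by apply/eqP; rewrite -(eqn_exp2l _ _ (isT : 1 < 2)) -oC eqCK oK.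
have prCK : 'C_K[x] \proper K.
  rewrite properEneq sCK andbT; apply: contraFneq Zx => eqCK.
  by rewrite inE Kx -sub_cent1 -{1}eqCK subsetIr.
by rewrite -(ltn_exp2l _ _ (isT : 1 < 2)) -oC -oK proper_card.
Qed.

Lemma squares_in_cent_quotient : squares_in ('C_K[x] / <[x]>) (coset <[x]> z).
Proof.
have [Zz nz z2 sqx] := sqK; have /centerP[Kz cKz] := Zz.
have [_ nXC] := andP cycle_normal_cent.
have Cz : z \in 'C_K[x] by rewrite inE Kz; apply/cent1P/cKz.
split.
- apply/centerP; split=> [|_ /morphimP[y Ny Cy ->]]; first exact: mem_quotient.
  by rewrite /commute -!morphM ?(subsetP nXC) // (cKz y (subsetP (subsetIl _ _) y Cy)).
- apply: contra x1z => /eqP zX1.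
  have : z \in <[x]> by apply: coset_idr zX1; rewrite (subsetP nXC).
  by rewrite cycle2g -?orderE // !inE (negPf nz) /= eq_sym => ->; rewrite orbT.
- by rewrite -morphX ?(subsetP nXC) // z2 morph1.
- move=> _ /morphimP[y Ny Cy ->]; rewrite -morphX //.
  by case: (sqx y (subsetP (subsetIl _ _) y Cy)) => ->; [left; rewrite morph1 | right].
Qed.

(* Subgroups avoiding z are elementary abelian, so those containing x lie in
   C_K(x) and correspond to subgroups of C_K(x)/<x> avoiding the image of z. *)
Lemma s_avoid_through k :
  #|[set H : {group gT} | [&& H \subset K, #|H| == (2 ^ k.+1)%N, z \notin H & x \in H]]| =
  s_avoid ('C_K[x] / <[x]>) (coset <[x]> z) k.
Proof.
have nsXC := cycle_normal_cent; have [_ nXC] := andP nsXC.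
pose P (Hb : {set coset_of <[x]>}) := (#|Hb| == (2 ^ k)%N) && (coset <[x]> z \notin Hb).
rewrite /s_avoid -(card_quotient_subgroups P nsXC).
apply: eq_card => H; rewrite !inE /P cycle_subG.
case xH: (x \in H); rewrite ?andbF ?andbT //=.
apply/idP/idP => [/and3P[sHK oH zH] | /and3P[sHC oH zH]].
  have sHC : H \subset 'C_K[x].
    rewrite subsetI sHK sub_cent1 /=.
    exact: subsetP (abelem_abelian (exponent2_abelem (avoid_exponent2 sHK zH))) x xH.
  rewrite sHC -card_quotient2 ?cycle_subG ?(subset_trans sHC) //.
  rewrite oH /=; apply: contra zH => zHb.
  have nsXH : <[x]> <| H by rewrite (normalS _ sHC nsXC) ?cycle_subG.
  have [/centerP[Kz cKz] _ _ _] := sqK.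
  have Nz : z \in 'N(<[x]>) by rewrite (subsetP nXC) // inE Kz; apply/cent1P/cKz.
  by rewrite -(quotientGK nsXH); apply: mem_morphpre Nz zHb.
rewrite (subset_trans sHC (subsetIl _ _)) (card_quotient2 _ ox) ?cycle_subG //=.
  by rewrite oH; apply: contra zH; apply: mem_quotient.
exact: subset_trans sHC nXC.
Qed.

End Centralizer.

Lemma s_avoid_pair_count k :
  ((2 ^ k.+1).-1 * s_avoid K z k.+1 =
   \sum_(x in 'Ldiv_2(K) :\: [set 1%g; z]) s_avoid ('C_K[x] / <[x]>) (coset <[x]> z) k)%N.
Proof.
pose S := [set H : {group gT} | [&& H \subset K, #|H| == (2 ^ k.+1)%N & z \notin H]].
have -> : ((2 ^ k.+1).-1 * s_avoid K z k.+1 = \sum_(H in S) #|H :\ 1%g|)%N.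
  rewrite mulnC -sum_nat_const; apply: eq_bigr => H; rewrite inE => /and3P[_ /eqP oH _].
  by rewrite -oH (cardsD1 1 H) group1.
rewrite double_count [RHS]big_mkcond /=; apply: eq_bigr => x _.
case: ifP => [/setDP[/LdivP[Kx x2] x1z] | notAx].
  have nx1 : x != 1 by apply: contraNneq x1z => ->; rewrite !inE eqxx.
  rewrite -s_avoid_through //; apply: eq_card => H; rewrite !inE nx1 /=.
  by rewrite -!andbA.
apply/eqP; rewrite cards_eq0; apply/eqP/setP => H; rewrite !inE.
apply/negP => /andP[/and3P[sHK _ zH] /andP[nx1 xH]].
move/negbT: notAx; rewrite !inE (subsetP sHK x xH) (exponentP (avoid_exponent2 sHK zH)) //.
rewrite (negPf nx1) eqxx /= andbT => /negP; apply.
by apply: contraNneq zH => <-.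
Qed.

Lemma squares_in_commute g w : g \in K -> w \in <[z]> -> commute g w.
Proof.
have [Zz _ _ _] := sqK; have sZZ : <[z]> \subset 'Z(K) by rewrite cycle_subG.
by move=> Kg /(subsetP sZZ)/centerP[_ cwK]; apply/commute_sym/cwK.
Qed.

Lemma squares_in_commg u v : u \in K -> v \in K -> [~ u, v] \in <[z]>.
Proof.
move=> Ku Kv; have cKKb := abelem_abelian squares_in_quotient_abelem.
have [Zz _ _ _] := sqK.
have /andP[_ nZK] : <[z]> <| K by rewrite sub_center_normal ?cycle_subG.
apply: coset_idr; first by rewrite groupR ?(subsetP nZK).
rewrite morphR ?(subsetP nZK) //; apply/eqP/commgP.
exact: (centsP cKKb) _ (mem_quotient _ Ku) _ (mem_quotient _ Kv).
Qed.

Lemma squares_in_expM2 a b : a \in K -> b \in K ->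
  (a * b) ^+ 2 = a ^+ 2 * b ^+ 2 * [~ b, a].
Proof.
move=> Ka Kb; have Rba := squares_in_commg Kb Ka.
by rewrite (expMg_Rmul 2) //; apply: squares_in_commute.
Qed.

(* If [v, u] = z, then x, xu, xv and xuv never all square to 1. *)
Lemma card_Ldiv2_nonabelian : ~~ abelian K -> 4 * #|'Ldiv_2(K)| <= 3 * #|K|.
Proof.
have [_ nz _ _] := sqK.
case/subsetPn => v Kv ncKv.
have [u Ku ncvu] : exists2 u, u \in K & u \notin 'C[v].
  by apply/subsetPn; rewrite sub_cent1.
have Ruv : [~ v, u] = z.
  have := squares_in_commg Kv Ku; rewrite cycle2g ?squares_in_order // !inE.
  case/orP => [/commgP cvu | /eqP //].
  by case/cent1P: ncvu; apply: commute_sym.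
have not_all x : x \in K ->
    ~~ [&& x ^+ 2 == 1, (x * u) ^+ 2 == 1, (x * v) ^+ 2 == 1 & (x * (u * v)) ^+ 2 == 1].
  move=> Kx; apply/and4P => -[/eqP x2 /eqP xu2 /eqP xv2 /eqP xuv2].
  rewrite squares_in_expM2 // x2 mul1g in xv2.
  rewrite mulgA squares_in_expM2 ?groupM // xu2 mul1g commgMJ Ruv in xuv2.
  have cRu : [~ v, x] ^ u = [~ v, x].
    by rewrite /conjg -(squares_in_commute Ku (squares_in_commg Kv Kx)) mulKg.
  rewrite cRu mulgA (squares_in_commute (groupX 2 Kv) (cycle_id z)) -mulgA xv2 mulg1 in xuv2.
  by rewrite xuv2 eqxx in nz.
have sum_shift g : g \in K -> \sum_(x in K) ((x * g) ^+ 2 == 1%g : nat) = #|'Ldiv_2(K)|.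
  move=> Kg; rewrite sum_bool_card -(card_rcoset 'Ldiv_2(K) g^-1).
  by apply: eq_card => x; rewrite mem_rcoset invgK !inE groupMr.
have -> : (4 * #|'Ldiv_2(K)| = \sum_(x in K) (((x * 1) ^+ 2 == 1)%g + ((x * u) ^+ 2 == 1)%g
              + ((x * v) ^+ 2 == 1)%g + ((x * (u * v)) ^+ 2 == 1)%g))%N.
  by rewrite !big_split /= !sum_shift ?groupM // !mulSn mul0n addn0 !addnA.
rewrite mulnC -sum_nat_const; apply: leq_sum => x Kx; rewrite mulg1.
by move: (not_all x Kx); do 4!case: (_ ^+ 2 == 1).
Qed.

Lemma card_Ldiv2_center y : y \in K -> y ^+ 2 != 1 ->
  #|'Ldiv_2(K)| + #|'Ldiv_2('Z(K))| <= #|K|.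
Proof.
have [_ nz _ sqx] := sqK; move=> Ky ny.
have y2 : y ^+ 2 = z by case: (sqx y Ky) ny => ->; rewrite ?eqxx.
have sZyK : 'Ldiv_2('Z(K)) :* y \subset K :\: 'Ldiv_2(K).
  apply/subsetP => _ /rcosetP[x /LdivP[/centerP[Kx cxK] x2] ->].
  by rewrite !inE groupM // andbT expgMn ?x2 ?mul1g ?y2 ?nz //; apply: cxK.
have := subset_leq_card sZyK; rewrite card_rcoset cardsD (setIidPr (subsetIl _ _)).
by rewrite leq_subRL // subset_leq_card ?subsetIl.
Qed.

Lemma card_Ldiv2_le y : y \in K -> y ^+ 2 != 1 -> 4 * #|'Ldiv_2(K)| <= 3 * #|K|.
Proof.
move=> Ky ny; have := card_Ldiv2_center Ky ny.
have [cKK | /card_Ldiv2_nonabelian //] := boolP (abelian K).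
by rewrite (center_idP cKK); move: #|'Ldiv_2(K)| #|K| => s n; lia.
Qed.

End SquaresIn.

Section CentralInvolutions.
Variables (gT : finGroupType) (K : {group gT}) (z : gT).
Hypothesis sqK : squares_in K z.

Lemma card_Ldiv2_central :
  #|('Ldiv_2(K) :\: [set 1; z]) :&: 'Z(K)| = (#|'Ldiv_2('Z(K))| - 2)%N.
Proof.
rewrite -(card_Ldiv2D (squares_in_center sqK)); apply: eq_card => x; rewrite !inE.
by case: (x \in K); case: (x \in 'C(K)); rewrite /= ?andbF ?andbT.
Qed.

Lemma card_Ldiv2_noncentral :
  #|('Ldiv_2(K) :\: [set 1; z]) :\: 'Z(K)| <= #|'Ldiv_2(K)| - #|'Ldiv_2('Z(K))|.
Proof.
have sZK : 'Ldiv_2('Z(K)) \subset 'Ldiv_2(K) by rewrite setSI ?center_sub.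
rewrite -(setIidPr sZK) -cardsD subset_leq_card //.
apply/subsetP => x /setDP[/setDP[Lx _] nZx]; rewrite in_setD Lx andbT.
by apply: contra nZx => /LdivP[].
Qed.

Lemma card_Ldiv2_center_ge2 : 2 <= #|'Ldiv_2('Z(K))|.
Proof.
have [_ nz _ _] := sqK.
by have := subset_leq_card (sub1z_Ldiv2 (squares_in_center sqK)); rewrite cards2 eq_sym nz.
Qed.

End CentralInvolutions.

Lemma abelem_expg2 (gT : finGroupType) (A : {group gT}) x :
  2.-abelem A -> x \in A -> x ^+ 2 = 1.
Proof. by rewrite abelemE // => /andP[_ /exponentP]; apply. Qed.

Lemma abelem_squares_in (gT : finGroupType) (K : {group gT}) z :
  2.-abelem K -> z \in K -> z != 1 -> squares_in K z.
Proof.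
move=> abK Kz nz; have cKK := abelem_abelian abK.
split=> //; last by move=> x Kx; left; apply: abelem_expg2 abK Kx.
- by apply/centerP; split=> //; apply: (centsP cKK).
- exact: abelem_expg2 abK Kz.
Qed.

Lemma s_with_eq (gT rT : finGroupType) (K : {group gT}) (R : {group rT}) z w k :
  squares_in K z -> squares_in R w -> #|K| = #|R| -> s_with K z k = s_with R w k.
Proof.
move=> sqK sqR oKR; have [ZKz nz _ _] := sqK; have [ZRw nw _ _] := sqR.
case: k => [|k]; first by rewrite !s_with0.
rewrite (s_with_quotient _ ZKz (squares_in_order sqK)).
rewrite (s_with_quotient _ ZRw (squares_in_order sqR)); apply: s_k_isog.
rewrite (isog_abelem_card _ (squares_in_quotient_abelem sqK)).
rewrite squares_in_quotient_abelem //= -(eqn_pmul2l (isT : 0 < 2)).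
by rewrite -!card_squares_in_quotient // oKR.
Qed.

Lemma s_avoid_abelem_eq (gT rT : finGroupType) (K : {group gT}) (R : {group rT}) z w k :
  2.-abelem K -> 2.-abelem R -> z \in K -> z != 1 -> w \in R -> w != 1 -> #|K| = #|R| ->
  s_avoid K z k = s_avoid R w k.
Proof.
move=> abK abR Kz nz Rw nw oKR.
have sqK := abelem_squares_in abK Kz nz; have sqR := abelem_squares_in abR Rw nw.
apply/eqP; rewrite -(eqn_add2l (s_with K z k)) -s_k_split (s_with_eq k sqK sqR oKR).
by rewrite -s_k_split (s_k_isog k (_ : K \isog R)) // (isog_abelem_card _ abK) abR oKR /=.
Qed.

Definition abelem_avoid (m k : nat) : nat :=
  s_avoid [set: 'rV['Z_2]_m] (const_mx 1%R) k.

Lemma rV2_abelem m : 2.-abelem [set: 'rV['Z_2]_m].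
Proof. exact: (@mx_Fp_abelem 2 1 m). Qed.

Lemma card_rV2 m : #|[set: 'rV['Z_2]_m]| = (2 ^ m)%N.
Proof. by rewrite cardsT card_mx card_ord mul1n. Qed.

Lemma const1_neq1 m : (const_mx 1%R : 'rV['Z_2]_m.+1) != 1.
Proof. by apply/negP => /eqP/matrixP/(_ ord0 ord0); rewrite !mxE => /(congr1 val). Qed.

Lemma s_avoid_abelem (gT : finGroupType) (K : {group gT}) z m k :
  2.-abelem K -> z \in K -> z != 1 -> #|K| = (2 ^ m)%N -> s_avoid K z k = abelem_avoid m k.
Proof.
move=> abK Kz nz oK; case: m oK => [|m] oK.
  by have := squares_in_gt1 (abelem_squares_in abK Kz nz); rewrite oK.
apply: (s_avoid_abelem_eq _ abK (rV2_abelem m.+1)) => //; last by rewrite card_rV2.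
exact: const1_neq1.
Qed.

Lemma abelem_avoid_rec m k :
  ((2 ^ k.+1).-1 * abelem_avoid m.+1 k.+1 = (2 ^ m.+1 - 2) * abelem_avoid m k)%N.
Proof.
pose E := [set: 'rV['Z_2]_m.+1]%G; have abE : 2.-abelem E := rV2_abelem m.+1.
have sqE := abelem_squares_in abE (in_setT (const_mx 1%R)) (const1_neq1 m).
have LdivE : 'Ldiv_2(E) = E.
  by apply/setIidPl/subsetP => x Ex; rewrite inE (abelem_expg2 abE Ex).
rewrite /abelem_avoid (s_avoid_pair_count sqE).
rewrite (eq_bigr (fun=> abelem_avoid m k)) => [|x /setDP[/LdivP[Ex x2] x1z]].
  by rewrite sum_nat_const card_Ldiv2D // LdivE card_rV2 mulnC.
have [j oQ] := card_cent_quotient_pow Ex x2 x1z (card_rV2 m.+1).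
rewrite (center_idP (abelem_abelian abE)) Ex => -[ejm]; rewrite ejm in oQ.
have [/centerP[Qz _] nz _ _] := squares_in_cent_quotient sqE Ex x2 x1z.
by apply: s_avoid_abelem; rewrite ?quotient_abelem ?(abelemS (subsetIl _ _) abE).
Qed.

Lemma exp2S_pred_gt0 k : 0 < (2 ^ k.+1).-1.
Proof. by rewrite -subn1 subn_gt0 (ltn_exp2l 0). Qed.

Lemma abelem_avoid0 k : abelem_avoid 0 k = 0.
Proof.
apply: eq_card0 => H; rewrite !inE.
by rewrite (_ : const_mx 1%R = 1) ?group1 ?andbF //; apply/matrixP => i [].
Qed.

Lemma abelem_avoidS0 m : abelem_avoid m.+1 0 = 1%N.
Proof. by rewrite /abelem_avoid s_avoid0 ?const1_neq1. Qed.

Lemma abelem_avoid_leS m k : abelem_avoid m k <= abelem_avoid m.+1 k.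
Proof.
elim: k m => [|k IHk] [|m]; rewrite ?abelem_avoid0 ?abelem_avoidS0 //.
rewrite -(leq_pmul2l (exp2S_pred_gt0 k)) !abelem_avoid_rec.
by rewrite leq_mul ?leq_sub2r ?leq_exp2l.
Qed.

Lemma abelem_avoid_monotone k : {homo abelem_avoid^~ k : m1 m2 / m1 <= m2}.
Proof. by apply: homo_leq => [//|? ? ? /leq_trans|m]; [apply | apply: abelem_avoid_leS]. Qed.

Lemma s_avoid_le_abelem k (gT : finGroupType) (K : {group gT}) z m :
  squares_in K z -> #|K| = (2 ^ m)%N -> s_avoid K z k <= abelem_avoid m k.
Proof.
elim: k gT K z m => [|k IHk] gT K z [|m] sqK oK;
  try by have := squares_in_gt1 sqK; rewrite oK.
  by have [_ nz _ _] := sqK; rewrite s_avoid0 ?abelem_avoidS0.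
rewrite -(leq_pmul2l (exp2S_pred_gt0 k)) s_avoid_pair_count // abelem_avoid_rec.
apply: (@leq_trans (\sum_(x in 'Ldiv_2(K) :\: [set 1%g; z]) abelem_avoid m k)).
  apply: leq_sum => x /setDP[/LdivP[Kx x2] x1z].
  have [j oQ lejm] := card_cent_quotient_pow Kx x2 x1z oK.
  apply: leq_trans (IHk _ _ _ j (squares_in_cent_quotient sqK Kx x2 x1z) oQ) _.
  by apply: abelem_avoid_monotone; case: ifP lejm => _ => [[->] | /ltnW].
rewrite sum_nat_const card_Ldiv2D // leq_mul2r -oK leq_sub2r ?orbT //.
exact/subset_leq_card/subsetIl.
Qed.

(* Inclusion-exclusion over the two elementary abelian maximal subgroups of
   D8 x C2^(n-3) containing its central involution (see D8xC2_avoid_ge). *)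
Definition dihedral_avoid (n k : nat) : nat :=
  (2 * abelem_avoid n.-1 k - abelem_avoid n.-2 k)%N.

(* With E = e(n-2,k), E' = e(n-3,k), M = 2^(n-2), a = o-2 and c = s-o the left
   side is (2a+c)(E-E') + (a+c)E' <= (4M-4)(E-E') + (3M-2)E', the right side. *)
Lemma dihedral_avoid_step n k o s :
  2 <= n -> 2 <= o <= s -> s + o <= 2 ^ n -> 4 * s <= 3 * 2 ^ n ->
  (o - 2) * dihedral_avoid n.-1 k + (s - o) * abelem_avoid n.-2 k
    <= (2 ^ k.+1).-1 * dihedral_avoid n k.+1.
Proof.
case: n => [|[|[|m]]] // _ /andP[o2 os] os_n s_n.
  have [-> ->] : o = 2 /\ s = 2 by move: os_n; rewrite (_ : 2 ^ 2 = 4)%N //; lia.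
  by rewrite subnn !mul0n.
rewrite /dihedral_avoid /= [in X in _ <= X]mulnBr [in X in _ <= X]mulnCA !abelem_avoid_rec.
have := abelem_avoid_leS m k; move: os_n s_n; rewrite !expnS.
have := expn_gt0 2 m; move: (2 ^ m)%N (abelem_avoid m k) (abelem_avoid m.+1 k) => p e3 e.
nia.
Qed.

Lemma s_avoid_le_dihedral n (gT : finGroupType) (K : {group gT}) z y k :
  squares_in K z -> #|K| = (2 ^ n)%N -> y \in K -> y ^+ 2 != 1 ->
  s_avoid K z k <= dihedral_avoid n k.
Proof.
elim: n gT K z y k => [|n IHn] gT K z y k sqK oK Ky ny.
  by have := squares_in_gt1 sqK; rewrite oK.
case: n IHn oK => [|n] IHn oK.
  by move: ny; rewrite -[2]/(2 ^ 1)%N -oK expg_cardG // eqxx.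
have [_ nz _ sqx] := sqK.
have y2 : y ^+ 2 = z by case: (sqx y Ky) ny => ->; rewrite ?eqxx.
case: k => [|k].
  rewrite s_avoid0 // /dihedral_avoid /= abelem_avoidS0.
  by case: n {IHn oK} => [|n]; rewrite ?abelem_avoid0 ?abelem_avoidS0.
have := card_Ldiv2_center sqK Ky ny; have := card_Ldiv2_le sqK Ky ny; rewrite oK => hs hso.
have hos : 2 <= #|'Ldiv_2('Z(K))| <= #|'Ldiv_2(K)|.
  by rewrite (card_Ldiv2_center_ge2 sqK) subset_leq_card // setSI ?center_sub.
rewrite -(leq_pmul2l (exp2S_pred_gt0 k)) s_avoid_pair_count //.
apply: leq_trans (dihedral_avoid_step k _ hos hso hs) => //.
rewrite (big_setID 'Z(K)) /=; apply: leq_add.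
  rewrite -(card_Ldiv2_central sqK) -sum_nat_const; apply: leq_sum.
  move=> x /setIP[/setDP[/LdivP[Kx x2] x1z] Zx].
  have [j oQ] := card_cent_quotient_pow Kx x2 x1z oK; rewrite Zx => -[ejn].
  have sqQ := squares_in_cent_quotient sqK Kx x2 x1z; have [_ nzQ _ _] := sqQ.
  have Cy : y \in 'C_K[x].
    by rewrite inE Ky; apply/cent1P/commute_sym; case/centerP: Zx => _; apply.
  have Ny : y \in 'N(<[x]>) by rewrite (subsetP (normal_norm (cycle_normal_cent Kx))).
  rewrite ejn in oQ; apply: (IHn _ _ _ (coset <[x]> y) _ sqQ oQ); first exact: mem_quotient.
  by rewrite -morphX // y2.
apply: leq_trans (leq_mul (card_Ldiv2_noncentral K z) (leqnn _)).
rewrite -sum_nat_const; apply: leq_sum => x /setDP[/setDP[/LdivP[Kx x2] x1z] nZx].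
have [j oQ] := card_cent_quotient_pow Kx x2 x1z oK; rewrite (negPf nZx) => ljn.
apply: leq_trans (s_avoid_le_abelem k (squares_in_cent_quotient sqK Kx x2 x1z) oQ) _.
exact: abelem_avoid_monotone.
Qed.

Lemma squares_in_derived (gT : finGroupType) (G : {group gT}) z :
  2.-group G -> 'Phi(G) = G^`(1) -> #|G^`(1)| = 2 -> z \in G^`(1) -> z != 1 ->
  squares_in G z.
Proof.
move=> pG PhiG oG' G'z nz.
have z2 : z ^+ 2 = 1 by rewrite -oG' expg_cardG.
have G'E : G^`(1) = [set 1; z].
  apply/eqP; rewrite eq_sym eqEcard oG' cards2 eq_sym nz leqnn andbT.
  by apply/subsetP => x; rewrite !inE => /orP[] /eqP ->; rewrite ?group1.
have Zz : z \in 'Z(G).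
  apply/centerP; split=> [|g Gg]; first exact: subsetP (der_sub 1 G) z G'z.
  have : z ^ g \in G^`(1) by rewrite memJ_norm // (subsetP (der_norm 1 G)).
  rewrite G'E !inE conjg_eq1 (negPf nz) /= => /eqP zg.
  by apply/commgP/conjg_fixP.
split=> // x Gx.
have : x ^+ (2 ^ 1) \in 'Mho^1(G) by apply: Mho_p_elt => //; apply: mem_p_elt pG Gx.
move/(subsetP (joing_subr G^`(1) _)); rewrite -(Phi_joing pG) PhiG G'E !inE.
by case/orP => /eqP ->; [left | right].
Qed.

Lemma nonabelian_sq_neq1 (gT : finGroupType) (G : {group gT}) :
  ~~ abelian G -> exists2 y, y \in G & y ^+ 2 != 1.
Proof.
move=> ncG; apply/exists_inP; rewrite -negb_forall_in; apply: contra ncG => /forall_inP sqG.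
by apply/abelem_abelian/exponent2_abelem/exponentP => x /sqG /eqP.
Qed.

Lemma s_avoid_cover (gT : finGroupType) (K P1 P2 : {set gT}) z k :
  P1 \subset K -> P2 \subset K ->
  s_avoid P1 z k + s_avoid P2 z k <= s_avoid K z k + s_avoid (P1 :&: P2) z k.
Proof.
move=> sP1K sP2K.
pose S (P : {set gT}) :=
  [set H : {group gT} | [&& H \subset P, #|H| == (2 ^ k)%N & z \notin H]].
have SI : S P1 :&: S P2 = S (P1 :&: P2).
  apply/setP => H; rewrite !inE subsetI.
  by case: (H \subset P1); case: (H \subset P2); rewrite ?andbF ?andbb.
suff: #|S P1| + #|S P2| <= #|S K| + #|S (P1 :&: P2)| by [].
rewrite -cardsUI SI leq_add2r subset_leq_card //.
by apply/subsetP => H; rewrite !inE => /orP[] /and3P[sHP -> ->]; rewrite (subset_trans sHP).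
Qed.

Lemma expg_pair (gT1 gT2 : finGroupType) (a : (gT1 * gT2)%type) n :
  a ^+ n = (a.1 ^+ n, a.2 ^+ n).
Proof. by elim: n => // n IHn; rewrite !expgS IHn. Qed.

Lemma abelem_setX (gT1 gT2 : finGroupType) (A : {group gT1}) (B : {group gT2}) :
  2.-abelem A -> 2.-abelem B -> 2.-abelem (setX A B).
Proof.
move=> abA abB; apply/exponent2_abelem/exponentP => -[a b].
by rewrite in_setX expg_pair => /andP[Aa Bb]; rewrite (abelem_expg2 abA) ?(abelem_expg2 abB).
Qed.

Lemma squares_in_setX (gT1 gT2 : finGroupType) (K : {group gT1}) (B : {group gT2}) z :
  squares_in K z -> 2.-abelem B -> squares_in (setX K B) (z, 1).
Proof.
case=> /centerP[Kz cKz] nz z2 sqK abB; split.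
- apply/centerP; split=> [|[a b]]; first by rewrite in_setX Kz group1.
  rewrite in_setX => /andP[Ka _].
  by rewrite /commute; congr (_, _); rewrite ?mul1g ?mulg1 // cKz.
- by apply: contra nz => /eqP[/eqP].
- by rewrite expg_pair /= z2 expg1n.
- move=> [a b]; rewrite in_setX expg_pair /= => /andP[Ka Bb].
  by rewrite (abelem_expg2 abB Bb); case: (sqK a Ka) => ->; [left | right].
Qed.

Lemma squares_in_klein (gT : finGroupType) (K : {group gT}) z t :
  squares_in K z -> t \in K -> t ^+ 2 = 1 -> t \notin <[z]> ->
  2.-abelem (<[z]> <*> <[t]>) /\ #|<[z]> <*> <[t]>| = 4.
Proof.
move=> sqK Kt t2 ntZ; have [/centerP[_ cKz] _ _ _] := sqK.
have nt : t != 1 by apply: contraNneq ntZ => ->; apply: group1.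
have ot : #[t] = 2 by apply: nt_prime_order.
have cZT : <[t]> \subset 'C(<[z]>) by apply: cents_cycle; apply/commute_sym/cKz.
split.
  rewrite (cprod_abelem _ (cprodEY cZT)) !cycle_abelem ?orbT //.
  by rewrite ot (squares_in_order sqK).
rewrite cent_joinEr // TI_cardMg -?orderE ?ot ?(squares_in_order sqK) //.
by rewrite setIC prime_TIg -?orderE ?ot ?cycle_subG.
Qed.

Lemma D8_klein_pair : exists x y : 'D_8,
  [/\ squares_in [set: 'D_8] (x ^+ 2), y ^+ 2 = 1, (x * y) ^+ 2 = 1,
      y \notin <[x ^+ 2]> & x * y \notin <[x ^+ 2]>].
Proof.
have [[x y] genD [oy _]] := @generators_2dihedral _ [set: 'D_8]%G 3 isT (isog_refl _).
have [[_ oDX _] [D'E PhiD oD' _] _ _ _] :=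
  @dihedral2_structure _ [set: 'D_8]%G 3 x y isT genD (isog_refl _).
have [oD _ ox /setDP[_ Xy]] := genD.
have Xxy : x * y \notin <[x]> by rewrite groupMl ?cycle_id.
have sX2X : <[x ^+ 2]> \subset <[x]> by rewrite cycle_subG mem_cycle.
have pD : 2.-group [set: 'D_8] by rewrite /pgroup oD pnatX.
exists x, y; split.
- apply: squares_in_derived => //; first by rewrite D'E cycle_id.
  by rewrite -order_dvdn ox.
- by have := expg_order y; rewrite oy.
- by have := expg_order (x * y); rewrite oDX // inE Xxy in_setT.
- exact: contra (subsetP sX2X y) Xy.
- exact: contra (subsetP sX2X (x * y)) Xxy.
Qed.

Section D8xC2.
Variable m : nat.

Lemma card_D8xC2 : #|[set: D8xC2 m]| = (2 ^ m.+3)%N.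
Proof.
by rewrite cardsT card_prod -cardsT (@card_2dihedral 3) // -cardsT card_rV2 -expnD add3n.
Qed.

Lemma D8xC2_avoid_ge : exists2 zD : D8xC2 m, squares_in [set: D8xC2 m] zD &
  forall k, dihedral_avoid m.+3 k <= s_avoid [set: D8xC2 m] zD k.
Proof.
have [x [y [sqD y2 xy2 Zy Zxy]]] := D8_klein_pair; set z := x ^+ 2 in sqD Zy Zxy.
pose E := [set: 'rV['Z_2]_m]%G; have abE : 2.-abelem E := rV2_abelem m.
have DE : [set: D8xC2 m] = setX [set: 'D_8] E by apply/setP => -[a b]; rewrite !inE.
exists (z, 1); first by rewrite DE; apply: squares_in_setX.
move=> k; have [_ nz _ _] := sqD.
pose A1 := (<[z]> <*> <[y]>)%G; pose A2 := (<[z]> <*> <[x * y]>)%G.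
have [abA1 oA1] : 2.-abelem A1 /\ #|A1| = 4 := squares_in_klein sqD (in_setT y) y2 Zy.
have [abA2 oA2] : 2.-abelem A2 /\ #|A2| = 4 := squares_in_klein sqD (in_setT _) xy2 Zxy.
have zA12 : z \in A1 :&: A2 by rewrite inE !mem_gen ?inE ?cycle_id.
have oA12 : #|A1 :&: A2| = 2.
  have A2x : x \notin A2 by apply: contra nz => A2x; apply/eqP; apply: abelem_expg2 abA2 A2x.
  have prI : A1 :&: A2 \proper A1.
    rewrite properEneq subsetIl andbT; apply: contra A2x => /eqP eqI.
    have yA2 : y \in A2.
      by rewrite (subsetP (subsetIr A1 A2)) // eqI mem_gen ?inE ?cycle_id ?orbT.
    by rewrite -(mulgK y x) groupM ?groupV // mem_gen ?inE ?cycle_id ?orbT.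
  have lo : 2 <= #|A1 :&: A2|.
    have sZI : <[z]> \subset A1 :&: A2 by rewrite cycle_subG.
    by have := subset_leq_card sZI; rewrite -orderE (squares_in_order sqD).
  move: (cardSg (subsetIl A1 A2)) lo (proper_card prI); rewrite oA1.
  by case: #|_| => [|[|[|[]]]].
have avoid_setX (A : {group 'D_8}) j : 2.-abelem A -> z \in A -> #|A| = (2 ^ j)%N ->
    s_avoid (setX A E) (z, 1) k = abelem_avoid (j + m) k.
  move=> abA zA oA; apply: s_avoid_abelem.
  - exact: abelem_setX.
  - by rewrite in_setX zA group1.
  - by apply: contra nz => /eqP[/eqP].
  - by rewrite cardsX oA card_rV2 expnD.
have := s_avoid_cover (z, 1) k (subsetT (setX A1 E)) (subsetT (setX A2 E)).
have -> : setX A1 E :&: setX A2 E = setX (A1 :&: A2) E.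
  by apply/setP => -[a b]; rewrite !inE andbACA andbb.
have [zA1 zA2] := setIP zA12; have abA12 := abelemS (subsetIl A1 A2) abA1.
rewrite (avoid_setX _ 2) // (avoid_setX _ 2) // (avoid_setX _ 1%N) // add2n add1n.
by rewrite /dihedral_avoid /= leq_subLR mul2n -addnn addnC.
Qed.

End D8xC2.

Theorem corollary2p7 (gT : finGroupType) (G : {group gT}) (n : nat) :
  2.-group G -> #|G| = (2 ^ n)%N -> 3 <= n ->
  extraspecial2 G \/ almost_extraspecial2 G ->
  forall k : nat, k <= n ->
    s_k G k <= s_k [set: D8xC2 (n - 3)] k.
Proof.
move=> pG oG n3 esG k _.
have [PhiG oG'] : 'Phi(G) = G^`(1) /\ #|G^`(1)| = 2.
  by case: esG => [[ZG G'G oZ] | [G'G oG' _ _]]; split; rewrite -?G'G -?ZG.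
have [z G'z nz] : exists2 z, z \in G^`(1) & z != 1.
  by apply/trivgPn; rewrite trivg_card1 oG'.
have sqG := squares_in_derived pG PhiG oG' G'z nz.
have [y Gy ny] : exists2 y, y \in G & y ^+ 2 != 1.
  by apply: nonabelian_sq_neq1; apply/derG1P => G'1; rewrite G'1 cards1 in oG'.
case: n oG n3 => [|[|[|m]]] // oG _; rewrite !subSS subn0.
have [zD sqD geD] := D8xC2_avoid_ge m.
rewrite (s_k_split _ z) (s_k_split _ zD) (s_with_eq k sqG sqD) ?oG ?card_D8xC2 //.
by rewrite leq_add2l (leq_trans _ (geD k)) // (s_avoid_le_dihedral _ sqG oG Gy ny).
Qed.
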